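(* Let $(X,\|\cdot\|_X)\subset(Y,\|\cdot\|_Y)$ be normed spaces, $\theta,a\ge0$, $m\in\mathbb N_*$. Then $$B_{\alpha,\beta}(X,Y)\subset S_{\theta,m,a}(X,Y)\qquad\text{with }\alpha=\frac{\theta}{2m},\ \beta=2+a+\frac{\theta}{m}.$$
   Context: $B_X(R)=\{x\in X:\|x\|_X\le R\}$, $d_Y(y,A)=\inf_{x\in A}\|y-x\|_Y$, $B_{\alpha,\beta}(X,Y)=\{y\in Y:\limsup_{R\to\infty}R^\alpha(\ln R)^\beta d_Y(y,B_X(R))<\infty\}$. $\pi_{\theta,m,a}(y,(x_n)_n)=\sum_{n\ge1}\big(2^{n\theta}n^a\|y-x_n\|_Y+2^{-2nm}\|x_n\|_X\big)$, $\rho^{X,Y}_{\theta,m,a}(y)=\inf_{(x_n)\subset X}\pi_{\theta,m,a}(y,(x_n)_n)$, $S_{\theta,m,a}(X,Y)=\{y\in Y:\rho^{X,Y}_{\theta,m,a}(y)<\infty\}$. *)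

From Stdlib Require Import Reals ClassicalEpsilon.
Open Scope R_scope.

Record NormedSpace := {
  carrier :> Type;
  vzero : carrier;
  vadd : carrier -> carrier -> carrier;
  vopp : carrier -> carrier;
  vscal : R -> carrier -> carrier;
  vnorm : carrier -> R;
  vadd_assoc : forall u v w, vadd u (vadd v w) = vadd (vadd u v) w;
  vadd_comm : forall u v, vadd u v = vadd v u;
  vadd_0 : forall u, vadd u vzero = u;
  vadd_opp : forall u, vadd u (vopp u) = vzero;
  vscal_1 : forall u, vscal 1 u = u;
  vscal_assoc : forall r s u, vscal r (vscal s u) = vscal (r * s) u;
  vscal_distr_v : forall r u v, vscal r (vadd u v) = vadd (vscal r u) (vscal r v);
  vscal_distr_r : forall r s u, vscal (r + s) u = vadd (vscal r u) (vscal s u);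
  vnorm_eq0 : forall u, vnorm u = 0 -> u = vzero;
  vnorm_scal : forall r u, vnorm (vscal r u) = Rabs r * vnorm u;
  vnorm_triang : forall u v, vnorm (vadd u v) <= vnorm u + vnorm v
}.

Arguments vzero {_}. Arguments vadd {_}. Arguments vopp {_}.
Arguments vscal {_}. Arguments vnorm {_}.

Definition vsub {V : NormedSpace} (u v : V) : V := vadd u (vopp v).

(* X ⊂ Y: a linear injective embedding iota : X -> Y. *)
Definition embedding (X Y : NormedSpace) (iota : X -> Y) : Prop :=
  (forall u v, iota (vadd u v) = vadd (iota u) (iota v)) /\
  (forall r u, iota (vscal r u) = vscal r (iota u)) /\
  (forall u v, iota u = iota v -> u = v).

(* Infimum of a set of reals (meaningful for nonempty sets bounded below). *)
Definition is_glb (A : R -> Prop) (m : R) : Prop :=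
  (forall x, A x -> m <= x) /\ (forall b, (forall x, A x -> b <= x) -> b <= m).

Definition Rinf (A : R -> Prop) : R := epsilon (inhabits 0) (fun m => is_glb A m).

Definition ballX (X : NormedSpace) (Rad : R) (x : X) : Prop := vnorm x <= Rad.

Definition distY (X Y : NormedSpace) (iota : X -> Y) (y : Y) (Rad : R) : R :=
  Rinf (fun d => exists x : X, ballX X Rad x /\ d = vnorm (vsub y (iota x))).

(* B_{alpha,beta}(X,Y): limsup_{R->oo} R^alpha (ln R)^beta d_Y(y,B_X(R)) < oo,
   i.e. the (nonnegative for R>1) quantity is eventually bounded above. *)
Definition in_B (X Y : NormedSpace) (iota : X -> Y) (alpha beta : R) (y : Y) : Prop :=
  exists C R0, forall Rad, R0 <= Rad ->
    Rpower Rad alpha * Rpower (ln Rad) beta * distY X Y iota y Rad <= C.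

(* n-th term (n >= 1) of pi_{theta,m,a}(y,(x_n)) *)
Definition pi_term (X Y : NormedSpace) (iota : X -> Y) (theta : R) (m : nat) (a : R)
  (y : Y) (xs : nat -> X) (n : nat) : R :=
  Rpower 2 (INR n * theta) * Rpower (INR n) a * vnorm (vsub y (iota (xs n)))
  + Rpower 2 (- (2 * INR n * INR m)) * vnorm (xs n).

Definition pi_finite (X Y : NormedSpace) (iota : X -> Y) (theta : R) (m : nat) (a : R)
  (y : Y) (xs : nat -> X) : Prop :=
  exists l, infinite_sum (fun k => pi_term X Y iota theta m a y xs (S k)) l.

(* S_{theta,m,a}(X,Y) = {y | rho(y) < oo}; since rho is the infimum over
   sequences of pi in [0,oo], rho(y) < oo iff some sequence has finite pi. *)
Definition in_S (X Y : NormedSpace) (iota : X -> Y) (theta : R) (m : nat) (a : R)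
  (y : Y) : Prop :=
  exists xs : nat -> X, pi_finite X Y iota theta m a y xs.

(* At step n we use the radius R_n = 2^(2nm) / n^2 and pick x_n in
   B_X(R_n) whose distance to y exceeds d_Y(y, B_X(R_n)) by a tolerance small
   enough to be harmless.  Then
   - the penalty term satisfies 2^(-2nm) ||x_n||_X <= 2^(-2nm) R_n = 1/n^2;
   - since ln R_n >= n ln 2 (because n^2 <= 2^n for n >= 4) and
     R_n^alpha = 2^(n theta) n^(-theta/m), the weight 2^(n theta) n^a is at most
     (ln 2)^(-beta) R_n^alpha (ln R_n)^beta / n^2, so the approximation term is
     at most C (ln 2)^(-beta) / n^2 + 1/(n+1)^2.
   Hence the n-th term of pi_{theta,m,a}(y, (x_n)) is O(1/n^2) and the series
   converges. *)

From Stdlib Require Import Reals ClassicalEpsilon Classical Lra Lia Psatz.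
From Coquelicot Require Import Coquelicot.
Open Scope R_scope.

(* Norms are nonnegative: this follows from the axioms, since
   0 = ||u + (-1)u|| <= 2 ||u||. *)
Lemma vnorm_nonneg (V : NormedSpace) (u : V) : 0 <= vnorm u.
Proof.
  pose proof (vnorm_triang V u (vscal (-1) u)) as Htri.
  rewrite <- (vscal_1 V u) in Htri at 1.
  rewrite <- vscal_distr_r, !vnorm_scal in Htri.
  replace (1 + -1) with 0 in Htri by ring.
  rewrite Rabs_R0, Rabs_left1 in Htri by lra.
  lra.
Qed.

Section DistanceToBalls.

Variables (X Y : NormedSpace) (iota : X -> Y) (y : Y).

(* For a nonnegative radius the set of distances {||y - x|| : x in B_X(R)} is
   nonempty (it contains the distance to 0 * 0) and bounded below by 0, so
   [distY] really is its greatest lower bound. *)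
Lemma distY_glb (Rad : R) :
  0 <= Rad ->
  is_glb (fun d => exists x : X, ballX X Rad x /\ d = vnorm (vsub y (iota x)))
         (distY X Y iota y Rad).
Proof.
  intros HRad. unfold distY, Rinf. apply epsilon_spec.
  set (D := fun d => exists x : X, ballX X Rad x /\ d = vnorm (vsub y (iota x))).
  destruct (completeness (fun z => D (- z))) as [l [Hub Hlub]].
  - exists 0. intros z [x [_ Hz]].
    pose proof (vnorm_nonneg _ (vsub y (iota x))). lra.
  - exists (- vnorm (vsub y (iota (vscal 0 vzero)))), (vscal 0 vzero).
    split; [|ring].
    unfold ballX. rewrite vnorm_scal, Rabs_R0. lra.
  - exists (- l). split.
    + intros d Hd.
      assert (l >= - d); [|lra].
      apply Rle_ge, Hub. unfold D. rewrite Ropp_involutive. exact Hd.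
    + intros b Hb.
      assert (l <= - b); [|lra].
      apply Hlub. intros z Hz. specialize (Hb _ Hz). lra.
Qed.

Lemma distY_nonneg (Rad : R) : 0 <= Rad -> 0 <= distY X Y iota y Rad.
Proof.
  intros HRad. apply (distY_glb Rad HRad).
  intros d [x [_ ->]]. apply vnorm_nonneg.
Qed.

Lemma distY_approx (Rad eps : R) :
  0 <= Rad -> 0 < eps ->
  exists x : X, vnorm x <= Rad /\ vnorm (vsub y (iota x)) <= distY X Y iota y Rad + eps.
Proof.
  intros HRad Heps. apply NNPP. intros Hnone.
  destruct (distY_glb Rad HRad) as [_ Hgreatest].
  assert (distY X Y iota y Rad + eps <= distY X Y iota y Rad); [|lra].
  apply Hgreatest. intros d [x [Hx ->]].
  apply Rnot_lt_le. intros Hlt.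
  apply Hnone. exists x. split; [exact Hx | lra].
Qed.

Lemma approximating_sequence (rad eps : nat -> R) :
  (forall n, 0 <= rad n) -> (forall n, 0 < eps n) ->
  exists xs : nat -> X, forall n,
    vnorm (xs n) <= rad n /\
    vnorm (vsub y (iota (xs n))) <= distY X Y iota y (rad n) + eps n.
Proof.
  intros Hrad Heps.
  pose (pick n := constructive_indefinite_description _
                    (distY_approx (rad n) (eps n) (Hrad n) (Heps n))).
  exists (fun n => proj1_sig (pick n)).
  intros n. exact (proj2_sig (pick n)).
Qed.

End DistanceToBalls.

Lemma exp_le (u v : R) : u <= v -> exp u <= exp v.
Proof. intros [Hlt | ->]; [left; apply exp_increasing, Hlt | lra]. Qed.

Lemma ln2_pos : 0 < ln 2.
Proof. rewrite <- ln_1. apply ln_increasing; lra. Qed.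

Lemma square_le_pow2 (n : nat) : (4 <= n)%nat -> (n ^ 2 <= 2 ^ n)%nat.
Proof.
  induction 1 as [|n Hn IH]; [simpl; lia|].
  assert (Hsq : (S n ^ 2 <= 2 * n ^ 2)%nat) by (rewrite !Nat.pow_2_r; nia).
  rewrite (Nat.pow_succ_r' 2 n). lia.
Qed.

Lemma two_ln_le (n : nat) : (4 <= n)%nat -> 2 * ln (INR n) <= INR n * ln 2.
Proof.
  intros Hn.
  assert (Hpos : 0 < INR n) by (apply lt_0_INR; lia).
  pose proof (le_INR _ _ (square_le_pow2 n Hn)) as Hle.
  rewrite !pow_INR in Hle. replace (INR 2) with 2 in Hle by (simpl; ring).
  apply ln_le in Hle; [|apply pow_lt; lra].
  rewrite !ln_pow in Hle by lra. replace (INR 2) with 2 in Hle by (simpl; ring).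
  exact Hle.
Qed.

Lemma exp_two_ln (x : R) : 0 < x -> exp (2 * ln x) = x ^ 2.
Proof.
  intros Hx. replace (2 * ln x) with (ln x + ln x) by ring.
  rewrite exp_plus, exp_ln by exact Hx. ring.
Qed.

(* The radius used at step n: R_n = 2^(2nm) / n^2. *)
Definition radius (m n : nat) : R := exp (2 * INR n * INR m * ln 2 - 2 * ln (INR n)).

Lemma ln_radius (m n : nat) :
  ln (radius m n) = 2 * INR n * INR m * ln 2 - 2 * ln (INR n).
Proof. apply ln_exp. Qed.

Lemma ln_radius_ge (m n : nat) :
  (1 <= m)%nat -> (4 <= n)%nat -> INR n * ln 2 <= ln (radius m n).
Proof.
  intros Hm Hn. rewrite ln_radius.
  pose proof (two_ln_le n Hn). pose proof ln2_pos.
  assert (1 <= INR m) by (apply (le_INR 1); lia).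
  assert (0 <= INR n * ln 2) by (apply Rmult_le_pos; [apply pos_INR | lra]).
  nra.
Qed.

Lemma radius_unbounded (m : nat) (R0 : R) :
  (1 <= m)%nat ->
  exists N, (4 <= N)%nat /\ forall n, (N <= n)%nat -> R0 <= radius m n.
Proof.
  intros Hm. pose proof ln2_pos.
  destruct (INR_unbounded (R0 / ln 2)) as [K HK].
  exists (K + 4)%nat. split; [lia|]. intros n Hn.
  assert (HR0 : R0 <= INR n * ln 2).
  { assert (INR K <= INR n) by (apply le_INR; lia).
    apply Rmult_le_reg_r with (/ ln 2); [apply Rinv_0_lt_compat; lra|].
    rewrite Rmult_assoc, Rinv_r, Rmult_1_r by lra. unfold Rdiv in HK. lra. }
  pose proof (ln_radius_ge m n Hm ltac:(lia)).
  pose proof (exp_ineq1_le (ln (radius m n))) as Hexp.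
  rewrite exp_ln in Hexp by apply exp_pos.
  lra.
Qed.

Lemma penalty_radius (m n : nat) :
  (1 <= n)%nat ->
  Rpower 2 (- (2 * INR n * INR m)) * radius m n = / INR n ^ 2.
Proof.
  intros Hn. assert (0 < INR n) by (apply lt_0_INR; lia).
  unfold Rpower, radius. rewrite <- exp_plus.
  replace (- (2 * INR n * INR m) * ln 2 + (2 * INR n * INR m * ln 2 - 2 * ln (INR n)))
    with (- (2 * ln (INR n))) by ring.
  rewrite exp_Ropp, exp_two_ln by exact H. reflexivity.
Qed.

Lemma weight_le_radius_power (theta a : R) (m n : nat) :
  0 <= theta -> 0 <= a -> (1 <= m)%nat -> (4 <= n)%nat ->
  let alpha := theta / (2 * INR m) in
  let beta := 2 + a + theta / INR m in
  Rpower 2 (INR n * theta) * Rpower (INR n) a * INR n ^ 2 <=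
  Rpower (ln 2) (- beta) *
    (Rpower (radius m n) alpha * Rpower (ln (radius m n)) beta).
Proof.
  intros Htheta Ha Hm Hn alpha beta.
  pose proof ln2_pos as Hln2.
  assert (Hnpos : 0 < INR n) by (apply lt_0_INR; lia).
  assert (Hmpos : 0 < INR m) by (apply lt_0_INR; lia).
  assert (Hbeta : 0 <= beta).
  { unfold beta. assert (0 <= theta / INR m) by (apply Rdiv_le_0_compat; lra). lra. }
  pose proof (ln_radius_ge m n Hm Hn) as Hgrowth.
  assert (Hlnln : ln (INR n) + ln (ln 2) <= ln (ln (radius m n))).
  { rewrite <- ln_mult by lra. apply ln_le; [apply Rmult_lt_0_compat|]; lra. }
  assert (Halpha : alpha * ln (radius m n) = INR n * theta * ln 2 - theta / INR m * ln (INR n)).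
  { rewrite ln_radius. unfold alpha. field. lra. }
  unfold Rpower. rewrite <- (exp_two_ln (INR n) Hnpos), <- !exp_plus.
  apply exp_le. rewrite Halpha.
  assert (beta * (ln (ln (radius m n)) - ln (INR n) - ln (ln 2)) >= 0) by nra.
  unfold beta in *. nra.
Qed.

(* The series sum 1/n^2 converges: its partial sums are bounded by
   2 - 1/n, by telescoping against 1/(n(n+1)). *)
Lemma inv_square_series : ex_series (fun k => / INR (S k) ^ 2).
Proof.
  apply ex_series_Reals_1, growing_cv.
  - intros n. rewrite tech5.
    assert (0 < / INR (S (S n)) ^ 2); [|lra].
    apply Rinv_0_lt_compat, pow_lt, lt_0_INR. lia.
  - assert (Htele : forall n, sum_f_R0 (fun k => / INR (S k) ^ 2) n <= 2 - / INR (S n)).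
    { induction n as [|n IH]; [simpl; lra|].
      rewrite tech5, (S_INR (S n)).
      assert (0 < INR (S n)) by (apply lt_0_INR; lia).
      assert (/ (INR (S n) + 1) ^ 2 <= / INR (S n) - / (INR (S n) + 1)); [|lra].
      replace (/ INR (S n) - / (INR (S n) + 1)) with (/ (INR (S n) * (INR (S n) + 1)))
        by (field; lra).
      apply Rinv_le_contravar; nra. }
    exists 2. intros z [n ->]. specialize (Htele n).
    assert (0 < / INR (S n)) by (apply Rinv_0_lt_compat, lt_0_INR; lia).
    lra.
Qed.

Lemma summable_of_inv_square_bound (u : nat -> R) (K : R) (N : nat) :
  (forall n, (N <= n)%nat -> 0 <= u n <= K / INR n ^ 2) ->
  exists l, infinite_sum (fun k => u (S k)) l.
Proof.
  intros Hbound.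
  assert (Hex : ex_series (fun k => u (S k))).
  { apply (ex_series_incr_n _ N).
    apply (@ex_series_le R_AbsRing R_CompleteNormedModule)
      with (b := fun k => K * / INR (S (N + k)) ^ 2).
    - intros k. change (norm ?x) with (Rabs x).
      destruct (Hbound (S (N + k)) ltac:(lia)) as [Hlo Hhi].
      rewrite Rabs_pos_eq; assumption.
    - apply (ex_series_incr_n (fun k => K * / INR (S k) ^ 2) N).
      exact (ex_series_scal_l K _ inv_square_series). }
  destruct Hex as [l Hl]. exists l. apply is_series_Reals, Hl.
Qed.

Lemma pi_term_nonneg (X Y : NormedSpace) (iota : X -> Y) (theta : R) (m : nat) (a : R)
  (y : Y) (xs : nat -> X) (n : nat) :
  0 <= pi_term X Y iota theta m a y xs n.
Proof.
  unfold pi_term, Rpower.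
  pose proof (vnorm_nonneg _ (vsub y (iota (xs n)))).
  pose proof (vnorm_nonneg _ (xs n)).
  pose proof (exp_pos (INR n * theta * ln 2)).
  pose proof (exp_pos (a * ln (INR n))).
  pose proof (exp_pos (- (2 * INR n * INR m) * ln 2)).
  apply Rplus_le_le_0_compat; repeat apply Rmult_le_pos; lra.
Qed.

Lemma pi_term_le (X Y : NormedSpace) (iota : X -> Y) (theta : R) (m : nat) (a : R)
  (y : Y) (xs : nat -> X) (n : nat) (C : R) :
  0 <= theta -> 0 <= a -> (1 <= m)%nat -> (4 <= n)%nat ->
  let alpha := theta / (2 * INR m) in
  let beta := 2 + a + theta / INR m in
  let w := Rpower 2 (INR n * theta) * Rpower (INR n) a in
  Rpower (radius m n) alpha * Rpower (ln (radius m n)) beta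
    * distY X Y iota y (radius m n) <= C ->
  vnorm (xs n) <= radius m n ->
  vnorm (vsub y (iota (xs n))) <=
    distY X Y iota y (radius m n) + / (w * INR (S n) ^ 2) ->
  pi_term X Y iota theta m a y xs n <= (C * Rpower (ln 2) (- beta) + 2) / INR n ^ 2.
Proof.
  intros Htheta Ha Hm Hn alpha beta w HB Hball Happrox.
  set (d := distY X Y iota y (radius m n)) in *.
  set (Q := Rpower (radius m n) alpha * Rpower (ln (radius m n)) beta) in *.
  set (P := Rpower (ln 2) (- beta)).
  assert (Hnpos : 0 < INR n) by (apply lt_0_INR; lia).
  assert (Hn2 : 0 < INR n ^ 2) by (apply pow_lt; lra).
  assert (Hw : 0 < w) by (unfold w, Rpower; apply Rmult_lt_0_compat; apply exp_pos).
  assert (HP : 0 < P) by apply exp_pos.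
  assert (Hd : 0 <= d) by (apply distY_nonneg; left; apply exp_pos).
  assert (Hweight : w * INR n ^ 2 <= P * Q) by exact (weight_le_radius_power theta a m n Htheta Ha Hm Hn).
  assert (Hmain : w * d <= C * P / INR n ^ 2).
  { apply Rmult_le_reg_r with (INR n ^ 2); [exact Hn2|].
    replace (C * P / INR n ^ 2 * INR n ^ 2) with (C * P) by (field; lra).
    apply Rle_trans with (P * Q * d); [|nra].
    replace (w * d * INR n ^ 2) with (w * INR n ^ 2 * d) by ring.
    apply Rmult_le_compat_r; assumption. }
  assert (Htol : w * / (w * INR (S n) ^ 2) <= / INR n ^ 2).
  { rewrite Rinv_mult, <- Rmult_assoc, Rinv_r, Rmult_1_l by lra.
    apply Rinv_le_contravar; [exact Hn2|].
    apply pow_incr. split; [lra|]. apply le_INR. lia. }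
  assert (Hpenalty : Rpower 2 (- (2 * INR n * INR m)) * vnorm (xs n) <= / INR n ^ 2).
  { rewrite <- (penalty_radius m n) by lia.
    apply Rmult_le_compat_l; [left; apply exp_pos | exact Hball]. }
  assert (Happrox_w : w * vnorm (vsub y (iota (xs n))) <= w * d + / INR n ^ 2).
  { apply Rle_trans with (w * (d + / (w * INR (S n) ^ 2))); [|lra].
    apply Rmult_le_compat_l; [lra | exact Happrox]. }
  unfold pi_term. fold w.
  replace ((C * P + 2) / INR n ^ 2) with (C * P / INR n ^ 2 + / INR n ^ 2 + / INR n ^ 2)
    by (field; lra).
  lra.
Qed.

Theorem mainTheorem15 (X Y : NormedSpace) (iota : X -> Y)
  (Hemb : embedding X Y iota) (theta a : R) (m : nat)
  (Htheta : 0 <= theta) (Ha : 0 <= a) (Hm : (0 < m)%nat) :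
  forall y : Y,
    in_B X Y iota (theta / (2 * INR m)) (2 + a + theta / INR m) y ->
    in_S X Y iota theta m a y.
Proof.
  intros y [C [R0 HB]].
  set (w := fun n : nat => Rpower 2 (INR n * theta) * Rpower (INR n) a).
  set (eps := fun n : nat => / (w n * INR (S n) ^ 2)).
  destruct (approximating_sequence X Y iota y (radius m) eps) as [xs Hxs].
  - intros n. left. apply exp_pos.
  - intros n. apply Rinv_0_lt_compat, Rmult_lt_0_compat.
    + unfold w, Rpower. apply Rmult_lt_0_compat; apply exp_pos.
    + apply pow_lt, lt_0_INR. lia.
  - exists xs.
    destruct (radius_unbounded m R0 Hm) as [N [HN4 HNR0]].
    apply (summable_of_inv_square_bound _
             (C * Rpower (ln 2) (- (2 + a + theta / INR m)) + 2) N).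
    intros n Hn. split; [apply pi_term_nonneg|].
    destruct (Hxs n) as [Hball Happrox].
    apply pi_term_le; try assumption; try lia.
    apply HB, HNR0, Hn.
Qed.
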